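(* Under the hypotheses of the fidelity statement (that is: $\mathbf{X}\in[0,1]^{m\times 2n}$ with $n$ $(key,value)$ column pairs, $\delta\in(0,1)$, $b\ge\lceil\log_2(mn/\delta)\rceil$, and $\mathbf{X}_w$ obtained by keeping $key$ columns and moving each $value$ entry into the nearest (in interval index) green interval among $I_j=[\tfrac{j-1}{b},\tfrac{j}{b}]$, each interval green independently with probability $\tfrac12$ for each entry), for every $p\ge 1$, with probability at least $1-\delta$, $$\mathcal{W}_p(F_{\mathbf{X}},F_{\mathbf{X}_w})\le \frac{\sqrt{2n}\,\lceil\log_2(mn/\delta)\rceil}{b}.$$
   Context: $F_{\mathbf{X}}$ (resp. $F_{\mathbf{X}_w}$) denotes the empirical distribution on $\mathbb{R}^{2n}$ placing mass $1/m$ on each row of $\mathbf{X}$ (resp. $\mathbf{X}_w$), and $\mathcal{W}_p$ is the $p$-Wasserstein distance with respect to the Euclidean norm on $\mathbb{R}^{2n}$. *)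

From HB Require Import structures.
From mathcomp Require Import all_boot all_order all_algebra.
From mathcomp Require Import all_classical all_reals all_analysis.
Set Implicit Arguments. Unset Strict Implicit. Unset Printing Implicit Defensive.
Import Order.TTheory GRing.Theory Num.Theory.
Local Open Scope classical_set_scope.
Local Open Scope ring_scope.

(* A data matrix with n (key,value) column pairs is 'M_(m, n + n):
   column [lshift n k] is the key of pair k, column [rshift n k] its value. *)

Definition rowdist (R : realType) (m d : nat) (X Y : 'M[R]_(m, d)) (i j : 'I_m) : R :=
  Num.sqrt (\sum_(c < d) (X i c - Y j c) ^+ 2).

(* Couplings of the two empirical distributions (mass 1/m on each row),
   written as transport plans between the row indices. *)
Definition coupling (R : realType) (m : nat) (P : 'M[R]_(m, m)) : Prop :=
  (forall i j, 0 <= P i j) /\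
  (forall i, \sum_(j < m) P i j = m%:R^-1) /\
  (forall j, \sum_(i < m) P i j = m%:R^-1).

Definition Wp (R : realType) (p : R) (m d : nat) (X Y : 'M[R]_(m, d)) : R :=
  (inf [set c | exists P, coupling P /\
          c = \sum_(i < m) \sum_(j < m) P i j * (rowdist X Y i j) `^ p]) `^ p^-1.

(* Index (0-based) of the interval I_{j+1} = [j/b, (j+1)/b] containing x in [0,1];
   half-open convention [j/b,(j+1)/b), with x = 1 put in the last interval. *)
Definition interval_index (R : realType) (b : nat) (x : R) : nat :=
  minn b.-1 (Num.truncn (x * b%:R)).

Definition natdist (a c : nat) : nat := (a - c) + (c - a).

(* Green lists: for every entry (row i, value column k) a set of green intervals. *)
Definition greenConfig (m n b : nat) := {ffun 'I_m * 'I_n -> {set 'I_b}}.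

Definition valid_watermark (R : realType) (m n b : nat)
    (X Xw : 'M[R]_(m, n + n)) (G : greenConfig m n b) : Prop :=
  forall (i : 'I_m) (k : 'I_n),
    Xw i (lshift n k) = X i (lshift n k) /\
    (let x := X i (rshift n k) in
     let y := Xw i (rshift n k) in
     let t := interval_index b x in
     if G (i, k) == finset.set0 then y = x
     else exists2 g : 'I_b, g \in G (i, k) &
            (forall g' : 'I_b, g' \in G (i, k) -> (natdist g t <= natdist g' t)%N) /\
            (g%:R / b%:R <= y <= (g.+1)%:R / b%:R)).

(* Probability under independent fair green/red choices for every interval of
   every entry, i.e. the uniform distribution on green configurations. *)
Definition prob_green (R : realType) (m n b : nat) (E : {pred greenConfig m n b}) : R :=
  #|E|%:R / #|greenConfig m n b|%:R.

Definition ceil_log2 (R : realType) (y : R) : int := Num.ceil (ln y / ln 2).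

(* Let L = ceil(log2(mn/delta)) <= b. Around the original interval of each of
   the mn value entries fix a window of L consecutive intervals. If the window
   contains a green interval, the nearest green interval is less than L indices
   away, so the entry moves by at most L/b. A given window is entirely red with
   probability 2^-L <= delta/(mn), hence by the union bound every window contains
   a green interval with probability at least 1 - delta. On that event the
   coupling matching each row with its watermarked copy moves every row by at
   most sqrt(2n) L/b in Euclidean norm, and this bounds W_p. *)

From HB Require Import structures.
From mathcomp Require Import all_boot all_order all_algebra.
From mathcomp Require Import all_classical all_reals all_analysis.
From mathcomp Require Import lra zify.
From mathcomp Require unstable.
Set Implicit Arguments. Unset Strict Implicit. Unset Printing Implicit Defensive.
Import Order.TTheory GRing.Theory Num.Theory.
Local Open Scope ring_scope.

Lemma interval_index_lt (R : realType) (b : nat) (x : R) :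
  (0 < b)%N -> (interval_index b x < b)%N.
Proof. by move=> b0; rewrite /interval_index gtn_min prednK ?leqnn. Qed.

Lemma interval_index_bounds (R : realType) (b : nat) (x : R) :
  (0 < b)%N -> 0 <= x <= 1 ->
  (interval_index b x)%:R <= x * b%:R <= (interval_index b x).+1%:R.
Proof.
case: b => [//|b] _ /andP[x0 x1]; rewrite /interval_index succnK.
have xb0 : 0 <= x * b.+1%:R by rewrite mulr_ge0.
have xb1 : x * b.+1%:R <= b.+1%:R by rewrite ler_piMl ?ler0n.
have /andP[trunc_le /ltW lt_trunc] := truncn_itv xb0.
case: leqP => [b_le_trunc | _]; last by rewrite trunc_le lt_trunc.
by rewrite xb1 andbT (le_trans _ trunc_le) // ler_nat.
Qed.

Lemma interval_dist_le (R : realType) (b L g : nat) (x y : R) :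
  (0 < b)%N -> 0 <= x <= 1 -> (natdist g (interval_index b x) < L)%N ->
  g%:R / b%:R <= y <= g.+1%:R / b%:R -> `|x - y| <= L%:R / b%:R.
Proof.
move=> b0 x01; have := interval_index_bounds b0 x01.
set t := interval_index b x => /andP[tx xt] gt /andP[gy yg].
have bpos : 0 < b%:R :> R by rewrite ltr0n.
rewrite ler_pdivrMr // in gy; rewrite ler_pdivlMr // in yg.
have gtL : g.+1%:R <= t%:R + L%:R :> R.
  by rewrite -natrD ler_nat; move: gt; rewrite /natdist; lia.
have tgL : t.+1%:R <= g%:R + L%:R :> R.
  by rewrite -natrD ler_nat; move: gt; rewrite /natdist; lia.
rewrite -!natr1 in gtL tgL xt yg.
rewrite ler_pdivlMr // -(gtr0_norm bpos) -normrM mulrBl ler_norml; apply/andP; split; lra.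
Qed.

(* [L] consecutive indices starting at [t], shifted left to fit in ['I_b]. *)
Definition window (b L t : nat) : {set 'I_b} :=
  [set g : 'I_b | (minn t (b - L) <= g < minn t (b - L) + L)%N].

Lemma card_window (b L t : nat) : (L <= b)%N -> (L <= #|window b L t|)%N.
Proof.
case: b => [|b] Lb; first by rewrite (_ : L = 0%N) //; lia.
set s := minn t (b.+1 - L).
have val_shift (j : 'I_L) : val (inord (s + j) : 'I_b.+1) = (s + j)%N.
  by rewrite /= inordK //; have := ltn_ord j; rewrite /s; lia.
have shift_inj : injective (fun j : 'I_L => inord (s + j) : 'I_b.+1).
  by move=> j1 j2 /(congr1 val); rewrite !val_shift => /addnI/val_inj.
rewrite -[X in (X <= _)%N]card_ord -(card_imset _ shift_inj) subset_leq_card //.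
apply/fintype.subsetP => _ /imsetP[j _ ->]; rewrite inE val_shift.
by have := ltn_ord j; lia.
Qed.

Lemma natdist_window (b L t : nat) (g : 'I_b) :
  (t < b)%N -> g \in window b L t -> (natdist g t < L)%N.
Proof. by rewrite inE /natdist; lia. Qed.

Lemma valid_watermark_close (R : realType) (m n b L : nat)
    (X Xw : 'M[R]_(m, n + n)) (G : greenConfig m n b) :
  (0 < b)%N -> (forall i c, 0 <= X i c <= 1) -> valid_watermark X Xw G ->
  (forall i k,
     ~~ [disjoint G (i, k) & window b L (interval_index b (X i (rshift n k)))]) ->
  forall i c, `|X i c - Xw i c| <= L%:R / b%:R.
Proof.
move=> b0 X01 XwG G_meets i c.
case: (splitP c) => k ck.
  have -> : c = lshift n k by exact: val_inj.
  by have [-> _] := XwG i k; rewrite subrr normr0.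
have -> : c = rshift n k by exact: val_inj.
have [_] := XwG i k; case: eqP => [_ ->|_ [g gG [g_nearest gy]]].
  by rewrite subrr normr0.
have /pred0Pn[w /andP[wG w_window]] := G_meets i k.
apply: (interval_dist_le b0 (X01 _ _) _ gy).
apply: leq_ltn_trans (g_nearest w wG) (natdist_window (interval_index_lt _ b0) w_window).
Qed.

Lemma ceil_log2_spec (R : realType) (y : R) : 1 < y ->
  exists2 L : nat, ceil_log2 y = L%:Z & (0 < L)%N /\ y <= 2 ^+ L.
Proof.
move=> y1; have ln2_gt0 : 0 < ln (2 : R) by rewrite ln_gt0 // ltr1n.
have y_gt0 : 0 < y := lt_trans ltr01 y1.
have c_gt0 : 0 < ceil_log2 y by rewrite /ceil_log2 ceil_gt0 divr_gt0 // ln_gt0.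
have c_ge := ceil_ge (ln y / ln 2); rewrite -/(ceil_log2 y) in c_ge.
have cE : ceil_log2 y = `|ceil_log2 y|%N%:Z by rewrite gez0_abs // ltW.
exists `|ceil_log2 y|%N => //; split; first by rewrite -ltz_nat -cE.
rewrite cE ler_pdivrMr // in c_ge.
by rewrite -ler_ln ?posrE ?exprn_gt0 // lnXn // -(mulr_natl (ln 2)).
Qed.

Section Wasserstein.
Variables (R : realType) (m d : nat).
Implicit Types (X Y : 'M[R]_(m, d)) (p D : R).

Lemma rowdist_le X Y i j D : 0 <= D ->
  (forall c, `|X i c - Y j c| <= D) -> rowdist X Y i j <= Num.sqrt d%:R * D.
Proof.
move=> D0 XYD; rewrite -[D]ger0_norm // -sqrtr_sqr -sqrtrM ?ler0n // ler_wsqrtr //.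
rewrite mulr_natl -[d in _ *+ d]card_ord -sumr_const ler_sum // => c _.
by rewrite -real_normK ?num_real // lerXn2r ?nnegrE.
Qed.

Lemma coupling_diag : coupling ((m%:R^-1)%:M : 'M[R]_m).
Proof.
have sum_row (i : 'I_m) : \sum_j (m%:R^-1 : R)%:M i j = m%:R^-1.
  rewrite (bigD1 i) //= big1 ?addr0 => [|j /negbTE ji]; rewrite mxE ?eqxx //.
  by rewrite eq_sym ji.
split; first by move=> i j; rewrite mxE mulrn_wge0 ?invr_ge0.
split=> // j; rewrite (bigD1 j) //= big1 ?addr0 => [|i /negbTE ij]; rewrite mxE ?ij //.
by rewrite eqxx.
Qed.

Lemma Wp_le_diag p X Y D : (0 < m)%N -> 1 <= p -> 0 <= D ->
  (forall i, rowdist X Y i i <= D) -> Wp p X Y <= D.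
Proof.
move=> m_gt0 p1 D0 XYD; rewrite /Wp; set S := (X in inf X).
have S_ge0 c : S c -> 0 <= c.
  move=> [P [[P0 _] ->]]; do 2!(apply: sumr_ge0 => ? _); by rewrite mulr_ge0 ?powR_ge0.
have S_diag : S (\sum_i m%:R^-1 * rowdist X Y i i `^ p).
  exists (m%:R^-1)%:M; split; first exact: coupling_diag.
  apply: eq_bigr => i _; rewrite (bigD1 i) //= big1 ?addr0 => [|j /negbTE ij].
    by rewrite mxE eqxx.
  by rewrite mxE eq_sym ij mul0r.
have diag_le : \sum_i m%:R^-1 * rowdist X Y i i `^ p <= D `^ p.
  apply: le_trans (_ : \sum_(i < m) m%:R^-1 * D `^ p <= _).
    apply: ler_sum => i _; rewrite ler_pM2l ?invr_gt0 ?ltr0n //.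
    by rewrite ge0_ler_powR ?nnegrE ?sqrtr_ge0 //; lra.
  by rewrite sumr_const card_ord -mulrnAl -mulr_natr mulVf ?mul1r ?pnatr_eq0 -?lt0n.
have inf_le : inf S <= D `^ p.
  by apply: le_trans diag_le; apply: ge_inf => //; exists 0 => c /S_ge0.
have inf_ge0 : 0 <= inf S.
  by apply: lb_le_inf => [|c /S_ge0]; first exact: (ex_intro _ _ S_diag).
apply: le_trans (_ : (D `^ p) `^ p^-1 <= _).
  by rewrite ge0_ler_powR ?nnegrE ?invr_ge0 ?powR_ge0 //; lra.
by rewrite -powRrM mulfV ?powRr1 //; lra.
Qed.
End Wasserstein.

Section RandomSets.
Variables (aT T : finType).
Notation config := {ffun aT -> {set T}}.

(* Adding a subset of [W] to [G e] is injective on the [G] with [G e]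
   disjoint from [W]. *)
Lemma card_config_disjoint (e : aT) (W : {set T}) :
  (#|[set G : config | [disjoint G e & W]]| * 2 ^ #|W| <= #|config|)%N.
Proof.
pose add_to_e (GS : config * {set T}) : config :=
  [ffun x => if x == e then GS.1 x :|: GS.2 else GS.1 x].
rewrite -card_powerset -cardsX -(card_in_imset (f := add_to_e)).
  by rewrite -cardsT subset_leq_card ?subsetT.
move=> [G S] [G' S']; rewrite !inE /= => /andP[GW SW] /andP[G'W S'W] eqGS.
have eqx x : (if x == e then G x :|: S else G x) = (if x == e then G' x :|: S' else G' x).
  by have := congr1 (fun F : config => F x) eqGS; rewrite !ffunE.
have eqe := eqx e; rewrite eqxx in eqe.
have splitU (A B : {set T}) : [disjoint A & W] -> B \subset W ->
    B = (A :|: B) :&: W /\ A = (A :|: B) :\: W.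
  move=> AW BW; have /eqP BW0 : B :\: W == finset.set0 by rewrite finset.setD_eq0.
  rewrite finset.setIUl finset.setDUl (disjoint_setI0 AW) (finset.setIidPl BW).
  by rewrite (finset.setDidPl AW) BW0 finset.set0U finset.setU0.
have [S_eq Ge_eq] := splitU _ _ GW SW; have [S'_eq G'e_eq] := splitU _ _ G'W S'W.
have eqSS' : S = S' by rewrite S_eq S'_eq eqe.
suff -> : G = G' by rewrite eqSS'.
apply/ffunP => x; have := eqx x; case: eqP => [->|//] _.
by rewrite Ge_eq G'e_eq eqe.
Qed.

Lemma card_config_disjoint_some (W : aT -> {set T}) (L : nat) :
  (forall e, L <= #|W e|)%N ->
  (#|\bigcup_e [set G : config | [disjoint G e & W e]]| * 2 ^ L
     <= #|aT| * #|config|)%N.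
Proof.
move=> LW; apply: leq_trans (leq_mul (unstable.card_big_setU _ _ _) (leqnn _)) _.
rewrite big_distrl /= -sum_nat_const leq_sum // => e _.
apply: leq_trans (card_config_disjoint e (W e)).
by rewrite leq_mul2l leq_pexp2l ?LW ?orbT.
Qed.
End RandomSets.

Section GreenProbability.
Variables (R : realType) (m n b : nat).
Notation config := (greenConfig m n b).

Lemma card_greenConfig_gt0 : (0 < #|config|)%N.
Proof. by apply/card_gt0P; exists [ffun=> finset.set0]. Qed.

Lemma prob_greenC (E B : {pred config}) :
  {subset [predC B] <= E} -> 1 - prob_green R B <= prob_green R E.
Proof.
move=> BE; have N_gt0 := card_greenConfig_gt0.
rewrite /prob_green ler_pdivlMr ?ltr0n // mulrBl mul1r -mulrA.
rewrite mulVf ?mulr1 ?pnatr_eq0 -?lt0n //.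
rewrite lerBlDr -natrD ler_nat -(cardC B) addnC leq_add2r.
by apply/subset_leq_card/fintype.subsetP.
Qed.

Lemma prob_green_disjoint_some (W : 'I_m * 'I_n -> {set 'I_b}) (L : nat) :
  (forall e, L <= #|W e|)%N ->
  prob_green R (\bigcup_e [set G : config | [disjoint G e & W e]]) * 2 ^+ L
    <= (m * n)%:R.
Proof.
move=> LW; have := card_config_disjoint_some LW; rewrite card_prod !card_ord.
rewrite /prob_green mulrAC ler_pdivrMr ?ltr0n ?card_greenConfig_gt0 //.
by rewrite -natrX -!natrM ler_nat.
Qed.
End GreenProbability.

Theorem mainTheorem3 (R : realType) (m n b : nat) (X : 'M[R]_(m, n + n))
    (delta p : R)
    (wm : greenConfig m n b -> 'M[R]_(m, n + n)) :
  (0 < m)%N -> (0 < n)%N ->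
  (forall i c, 0 <= X i c <= 1) ->
  0 < delta < 1 ->
  ceil_log2 ((m * n)%:R / delta) <= (b%:Z) ->
  (forall G, valid_watermark X (wm G) G) ->
  1 <= p ->
  1 - delta <=
    prob_green R [pred G | Wp p X (wm G) <=
       Num.sqrt (n.*2)%:R * (ceil_log2 ((m * n)%:R / delta))%:~R / b%:R].
Proof.
move=> m_gt0 n_gt0 X01 /andP[delta_gt0 delta_lt1] Lb wmG p1.
have y_gt1 : 1 < (m * n)%:R / delta.
  by rewrite ltr_pdivlMr // mul1r (lt_le_trans delta_lt1) // ler1n muln_gt0 m_gt0.
have [L L_eq [L_gt0 y_le]] := ceil_log2_spec y_gt1.
rewrite L_eq lez_nat in Lb; rewrite L_eq; have b_gt0 := leq_trans L_gt0 Lb.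
pose W (e : 'I_m * 'I_n) := window b L (interval_index b (X e.1 (rshift n e.2))).
pose Bad := \bigcup_e [set G : greenConfig m n b | [disjoint G e & W e]].
apply: (le_trans _ (prob_greenC R (B := Bad) _)).
  have pow_gt0 : 0 < 2 ^+ L :> R by rewrite exprn_gt0.
  rewrite ler_pdivrMr // mulrC in y_le; rewrite lerD2l lerN2 -(ler_pM2r pow_gt0).
  apply: le_trans (prob_green_disjoint_some _ _) y_le => e; exact: card_window.
move=> G; rewrite !inE => G_good.
have G_meets i k : ~~ [disjoint G (i, k) & W (i, k)].
  by apply: contra G_good => G_misses; apply/bigcupP; exists (i, k); rewrite ?inE.
rewrite -mulrA -addnn; apply: Wp_le_diag => // i.
apply: rowdist_le => // c; exact: valid_watermark_close.
Qed.
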